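(* LexiPS is not lexi-efficient. Concretely, take $n=3$, $p=2$, $D_F=\{1_F,2_F,3_F\}$, $D_B=\{1_B,2_B,3_B\}$, and lexicographic preferences: agent 1: $F\rhd_1 B$, $1_F\rhd 2_F\rhd 3_F$, $1_B\rhd 2_B\rhd 3_B$; agent 2: $F\rhd_2 B$, $1_F\rhd 2_F\rhd 3_F$, $1_B\rhd 3_B\rhd 2_B$; agent 3: $B\rhd_3 F$, $1_F\rhd 2_F\rhd 3_F$, $2_B\rhd 3_B\rhd 1_B$. Then LexiPS gives agent 1 the allocation with share $0.25$ of each of $1_F1_B,1_F3_B,2_F1_B,2_F3_B$, and this allocation is lexicographically dominated w.r.t. $\succ_1$ by the allocation with share $0.5$ of $1_F1_B$ and $0.5$ of $2_F3_B$.
   Context: Setting: $N$ agents, types $D_i$ with $|D_i|=n$ pairwise disjoint, unit supply, bundles $\mathcal D=\prod_i D_i$, $x_i$ the type-$i$ component. Lexicographic preference: importance order $\rhd_j$ over types and orders $\rhd^i_j$ on each $D_i$; $x\succ_j y$ iff some type $i$ has $x_i\rhd^i_j y_i$ and $x_{i'}=y_{i'}$ for all $i'\rhd_j i$. Lexicographic dominance: allocation $p$ lexicographically dominates $q$ w.r.t. $\succ$ if there is a bundle $x$ with $p_x>q_x$ and $p_y\ge q_y$ for every $y\succ x$. An assignment $P$ is lexi-efficient if there is no assignment $Q$ such that $Q_j$ lexicographically dominates $P_j$ w.r.t. $\succ_j$ for every agent $j$. LexiPS: supplies start at $1$ and carry across phases; in phase $k=1,\dots,p$ (unit duration), each agent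 $j$ eats at rate $1$ her $\rhd^i_j$-favorite item with positive remaining supply among items of her $k$-th most important type $i$; with $s^i_{j,o}$ the amount eaten of $o\in D_i$, output $p_{j,x}=\prod_i s^i_{j,x_i}$. *)

From HB Require Import structures.
From mathcomp Require Import all_boot all_order all_algebra.
Set Implicit Arguments. Unset Strict Implicit. Unset Printing Implicit Defensive.
Import Order.TTheory GRing.Theory Num.Theory.
Local Open Scope ring_scope.

(* Setting: p types, each type i has item set D_i, modelled as 'I_n     *)
(* (tagged by the type, so the D_i are pairwise disjoint).  A bundle    *)
Definition bundle (p n : nat) := {ffun 'I_p -> 'I_n}.
Definition allocation (p n : nat) := {ffun bundle p n -> rat}.

(* A lexicographic preference: [imp] lists the types from most to least
   important (the order |>_j); [iord i] lists the items of type i from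
   most to least preferred (the order |>^i_j). *)
Record lexpref (p n : nat) := LexPref {
  imp : seq 'I_p;
  iord : 'I_p -> seq 'I_n }.

Definition wf_lexpref p n (P : lexpref p n) : bool :=
  perm_eq (imp P) (enum 'I_p) && [forall i, perm_eq (iord P i) (enum 'I_n)].

Definition lex_pref p n (P : lexpref p n) (x y : bundle p n) : bool :=
  [exists i : 'I_p,
     (index (x i) (iord P i) < index (y i) (iord P i))%N &&
     [forall i' : 'I_p, (index i' (imp P) < index i (imp P))%N ==> (x i' == y i')]].

Definition lex_dom p n (P : lexpref p n) (a b : allocation p n) : Prop :=
  exists x : bundle p n, b x < a x /\ forall y, lex_pref P y x -> b y <= a y.

Definition is_assignment N p n (Q : 'I_N -> allocation p n) : Prop :=
  (forall j x, 0 <= Q j x) /\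
  (forall j, \sum_(x : bundle p n) Q j x = 1) /\
  (forall (i : 'I_p) (o : 'I_n),
     \sum_(j < N) \sum_(x : bundle p n | x i == o) Q j x = 1).

Definition lexi_efficient N p n (prefs : 'I_N -> lexpref p n)
  (P : 'I_N -> allocation p n) : Prop :=
  ~ exists Q : 'I_N -> allocation p n,
      is_assignment Q /\ forall j, lex_dom (prefs j) (Q j) (P j).

(* LexiPS: simultaneous eating, exact event-driven simulation.          *)
Section LexiPS.
Variables (N p n : nat) (prefs : 'I_N -> lexpref p n).

Record ps_state := PSState {
  supply : 'I_p * 'I_n -> rat;
  eaten  : 'I_N * 'I_p * 'I_n -> rat;
  rtime  : rat }.

Definition target (k : nat) (sup : 'I_p * 'I_n -> rat) (j : 'I_N)
  : option ('I_p * 'I_n) :=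
  if onth (imp (prefs j)) k is Some t then
    if ohead [seq o <- iord (prefs j) t | 0 < sup (t, o)] is Some o
    then Some (t, o) else None
  else None.

Definition eaters k sup (io : 'I_p * 'I_n) : nat :=
  count (fun j => target k sup j == Some io) (enum 'I_N).

(* One event: everybody eats at rate 1 until the first targeted item is
   exhausted or the phase's time runs out. *)
Definition ps_step (k : nat) (st : ps_state) : ps_state :=
  let sup := supply st in
  let tg := target k sup in
  let targets := pmap tg (enum 'I_N) in
  if (targets == [::]) || (rtime st <= 0) then st else
  let dt := foldr (fun io m => Order.min m (sup io / (eaters k sup io)%:R))
                  (rtime st) targets in
  PSState
    (fun io => sup io - dt * (eaters k sup io)%:R)
    (fun jio : 'I_N * 'I_p * 'I_n =>
       eaten st jio + (if tg jio.1.1 == Some (jio.1.2, jio.2) then dt else 0))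
    (rtime st - dt).

(* Each non-final event exhausts an item, so p*n+1 events suffice. *)
Definition ps_phase (k : nat) (st : ps_state) : ps_state :=
  iter (p * n).+1 (ps_step k) st.

Definition lexiPS_state : ps_state :=
  foldl (fun st k => ps_phase k (PSState (supply st) (eaten st) 1))
        (PSState (fun _ => 1) (fun _ => 0) 1) (iota 0 p).

Definition lexiPS (j : 'I_N) : allocation p n :=
  [ffun x : bundle p n => \prod_(i < p) eaten lexiPS_state (j, i, x i)].

End LexiPS.

(* The concrete instance: N = n = 3, p = 2, type F = 0, type B = 1,    *)
(* item k_T is represented by the ordinal k-1 of type T.                *)
Definition tF : 'I_2 := @Ordinal 2 0 isT.
Definition tB : 'I_2 := @Ordinal 2 1 isT.
Definition it1 : 'I_3 := @Ordinal 3 0 isT.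
Definition it2 : 'I_3 := @Ordinal 3 1 isT.
Definition it3 : 'I_3 := @Ordinal 3 2 isT.
Definition agent1 : 'I_3 := @Ordinal 3 0 isT.
Definition agent2 : 'I_3 := @Ordinal 3 1 isT.
Definition agent3 : 'I_3 := @Ordinal 3 2 isT.

Definition ex_pref (j : 'I_3) : lexpref 2 3 :=
  if j == agent1 then
    LexPref [:: tF; tB] (fun i => if i == tF then [:: it1; it2; it3] else [:: it1; it2; it3])
  else if j == agent2 then
    LexPref [:: tF; tB] (fun i => if i == tF then [:: it1; it2; it3] else [:: it1; it3; it2])
  else
    LexPref [:: tB; tF] (fun i => if i == tF then [:: it1; it2; it3] else [:: it2; it3; it1]).

Definition bnd (a b : 'I_3) : bundle 2 3 := [ffun i => if i == tF then a else b].

Definition alloc_lexiPS_agent1 : allocation 2 3 :=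
  [ffun x => if x \in [:: bnd it1 it1; bnd it1 it3; bnd it2 it1; bnd it2 it3]
             then 1 / 4 else 0].

Definition alloc_better_agent1 : allocation 2 3 :=
  [ffun x => if x == bnd it1 it1 then 1 / 2
             else if x == bnd it2 it3 then 1 / 2 else 0].

From mathcomp Require Import all_boot all_order all_algebra.
From Stdlib Require Import FunctionalExtensionality.
Import Order.TTheory GRing.Theory Num.Theory.
Set Implicit Arguments. Unset Strict Implicit. Unset Printing Implicit Defensive.
Local Open Scope ring_scope.

(* The ordinals below n as a list that evaluates by computation (unlike
   [enum 'I_n], whose construction goes through opaque proofs). *)
Fixpoint ords (n : nat) : seq 'I_n :=
  if n is m.+1 then ord0 :: map (lift ord0) (ords m) else [::].

Lemma ordsE n : ords n = enum 'I_n.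
Proof.
apply: (inj_map val_inj); rewrite val_enum_ord.
elim: n => [|n IHn] //=; rewrite -map_comp.
by rewrite (eq_map (g := addn 1 \o val)) // map_comp IHn -iotaDl.
Qed.

Lemma mem_ords n (i : 'I_n) : i \in ords n.
Proof. by rewrite ordsE mem_enum. Qed.

Lemma forall_ords n (P : pred 'I_n) : [forall i, P i] = all P (ords n).
Proof. by apply/forallP/allP => [H i _|H i]; [exact: H|exact/H/mem_ords]. Qed.

(* Tabulating f on a list of keys: the resulting function stores the values
   instead of recomputing them, and agrees with f on the keys. *)
Definition tab (T : eqType) (keys : seq T) (f : T -> rat) : T -> rat :=
  let values := map f keys in fun x => nth 0 values (index x keys).

Lemma tabE (T : eqType) (keys : seq T) f x : x \in keys -> tab keys f x = f x.
Proof. by move=> kx; rewrite /tab (nth_map x) ?index_mem ?nth_index. Qed.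

Section FastLexiPS.
Variables (N p n : nat) (prefs : 'I_N -> lexpref p n).

Definition item_keys : seq ('I_p * 'I_n) :=
  [seq (i, o) | i <- ords p, o <- ords n].
Definition share_keys : seq ('I_N * 'I_p * 'I_n) :=
  [seq (ji, o) | ji <- [seq (j, i) | j <- ords N, i <- ords p], o <- ords n].

Definition tab_state (st : ps_state N p n) : ps_state N p n :=
  PSState (tab item_keys (supply st)) (tab share_keys (eaten st)) (rtime st).

Lemma tab_stateE st : tab_state st = st.
Proof.
case: st => s e r; congr PSState; apply: functional_extensionality => k.
  by rewrite tabE //; case: k => i o; rewrite allpairs_f ?mem_ords.
by rewrite tabE //; case: k => [[j i] o]; rewrite !allpairs_f ?mem_ords.
Qed.

(* [ps_step] with the list of agents as a parameter; [ps_step prefs] is by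
   definition [ps_step_on (enum 'I_N)]. *)
Definition ps_step_on (agents : seq 'I_N) (k : nat) (st : ps_state N p n) :=
  let sup := supply st in
  let tg := target prefs k sup in
  let nb io := count (fun j => tg j == Some io) agents in
  let targets := pmap tg agents in
  if (targets == [::]) || (rtime st <= 0) then st else
  let dt := foldr (fun io m => Order.min m (sup io / (nb io)%:R))
                  (rtime st) targets in
  PSState
    (fun io => sup io - dt * (nb io)%:R)
    (fun jio : 'I_N * 'I_p * 'I_n =>
       eaten st jio + (if tg jio.1.1 == Some (jio.1.2, jio.2) then dt else 0))
    (rtime st - dt).

Definition fast_state : ps_state N p n :=
  foldl (fun st k => iter (p * n).+1 (fun s => tab_state (ps_step_on (ords N) k s))
                          (PSState (supply st) (eaten st) 1))
        (PSState (fun _ => 1) (fun _ => 0) 1) (iota 0 p).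

Lemma fast_stateE : lexiPS_state prefs = fast_state.
Proof.
rewrite /lexiPS_state /fast_state /ps_phase; congr foldl.
apply: functional_extensionality => st; apply: functional_extensionality => k.
by apply: eq_iter => s; rewrite tab_stateE ordsE.
Qed.

End FastLexiPS.

Lemma lex_pref_better p n (P : lexpref p n) (y x : bundle p n) :
  lex_pref P y x -> exists i, (index (y i) (iord P i) < index (x i) (iord P i))%N.
Proof. by case/existsP => i /andP [better _]; exists i. Qed.

Lemma not_lex_pref p n (P : lexpref p n) (y x : bundle p n) :
  (forall i, index (x i) (iord P i) <= index (y i) (iord P i))%N -> ~~ lex_pref P y x.
Proof. by move=> worse; apply/negP => /lex_pref_better [i]; rewrite ltnNge worse. Qed.

(* Nothing is preferred to the top bundle, so more of it is a domination. *)
Lemma lex_dom_top p n (P : lexpref p n) (a b : allocation p n) (x : bundle p n) :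
  (forall i, index (x i) (iord P i) = 0)%N -> b x < a x -> lex_dom P a b.
Proof.
move=> top ltx; exists x; split => // y; apply: contraTT => _.
by apply: not_lex_pref => i; rewrite top.
Qed.

Lemma wf_lexpref_ords p n (P : lexpref p n) : wf_lexpref P =
  perm_eq (imp P) (ords p) && all (fun i => perm_eq (iord P i) (ords n)) (ords p).
Proof. by rewrite /wf_lexpref forall_ords !ordsE. Qed.

Section HalfHalf.
Variables (T : finType) (x1 x2 : T).
Hypothesis x12 : x1 != x2.

Definition half_half : {ffun T -> rat} :=
  [ffun x => if x == x1 then 1 / 2 else if x == x2 then 1 / 2 else 0].

Lemma half_half_ge0 x : 0 <= half_half x.
Proof. by rewrite ffunE; case: ifP => _ //; case: ifP. Qed.

Lemma sum_half_half_cond (P : pred T) :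
  \sum_(x | P x) half_half x = (P x1)%:R / 2 + (P x2)%:R / 2.
Proof.
have x21 : x2 != x1 by rewrite eq_sym.
rewrite big_mkcond (bigD1 x1) // (bigD1 x2) //= big1 => [|x /andP [/negPf x1x /negPf x2x]].
  rewrite !ffunE eqxx (negPf x21) eqxx addr0.
  by case: (P x1); case: (P x2); rewrite ?mul0r ?mul1r.
by rewrite ffunE x1x x2x; case: (P x).
Qed.

Lemma sum_half_half : \sum_x half_half x = 1.
Proof. by rewrite (sum_half_half_cond xpredT) /= -mulrDl. Qed.

End HalfHalf.

Lemma ord2P (i : 'I_2) : i = tF \/ i = tB.
Proof. case: i => [[|[|//]] Hi]; [left|right]; exact: val_inj. Qed.

Lemma ord3P (i : 'I_3) : [\/ i = it1, i = it2 | i = it3].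
Proof.
case: i => [[|[|[|//]]] Hi]; [apply: Or31|apply: Or32|apply: Or33]; exact: val_inj.
Qed.

Lemma sum_ord3 (F : 'I_3 -> rat) : \sum_(j < 3) F j = F agent1 + F agent2 + F agent3.
Proof.
rewrite !big_ord_recr big_ord0 /= add0r.
by congr (F _ + F _ + F _); apply: val_inj.
Qed.

Lemma bndF a b : bnd a b tF = a. Proof. by rewrite ffunE. Qed.
Lemma bndB a b : bnd a b tB = b. Proof. by rewrite ffunE. Qed.

Lemma bndE (x : bundle 2 3) : x = bnd (x tF) (x tB).
Proof. by apply/ffunP => i; rewrite ffunE; case: (ord2P i) => ->. Qed.

Lemma bnd_eq a b c d : (bnd a b == bnd c d) = (a == c) && (b == d).
Proof.
apply/eqP/andP => [E|[/eqP-> /eqP->]] //.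
by move: (congr1 (fun x : bundle 2 3 => (x tF, x tB)) E); rewrite /= !bndF !bndB => -[-> ->].
Qed.

Lemma wf_ex_pref j : wf_lexpref (ex_pref j).
Proof. by rewrite wf_lexpref_ords; case: (ord3P j) => ->; vm_compute. Qed.

(* The amounts eaten under LexiPS: agents 1 and 2 share 1_F, 2_F (phase 1)
   and 1_B, 3_B (phase 2) equally; agent 3 gets all of 2_B and 3_F. *)
Definition lexiPS_eaten (k : 'I_3 * 'I_2 * 'I_3) : rat :=
  let: (j, i, o) := k in
  if j == agent3 then (if i == tF then o == it3 else o == it2)%:R
  else (if i == tF then o != it3 else o != it2)%:R / 2.

Lemma fast_state_example :
  all (fun k => eaten (fast_state ex_pref) k == lexiPS_eaten k) (share_keys 3 2 3).
Proof. by vm_compute. Qed.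

Lemma eaten_example k : eaten (lexiPS_state ex_pref) k = lexiPS_eaten k.
Proof.
rewrite fast_stateE; apply/eqP; move/allP: fast_state_example; apply.
by case: k => [[j i] o]; rewrite !allpairs_f ?mem_ords.
Qed.

Lemma lexiPS_example j a b :
  lexiPS ex_pref j (bnd a b) = lexiPS_eaten (j, tF, a) * lexiPS_eaten (j, tB, b).
Proof.
rewrite ffunE big_ord_recr big_ord1 !eaten_example.
have -> : widen_ord (leqnSn 1) ord0 = tF by apply: val_inj.
have -> : (ord_max : 'I_2) = tB by apply: val_inj.
by rewrite bndF bndB.
Qed.

Lemma lexiPS_agent1 : lexiPS ex_pref agent1 = alloc_lexiPS_agent1.
Proof.
apply/ffunP => x; rewrite [x]bndE lexiPS_example ffunE !inE !bnd_eq.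
by case: (ord3P (x tF)) => ->; case: (ord3P (x tB)) => ->; apply/eqP; vm_compute.
Qed.

Lemma lexiPS_agent3_support y : lexiPS ex_pref agent3 y != 0 -> y = bnd it3 it2.
Proof.
rewrite [y]bndE lexiPS_example.
by case: (ord3P (y tF)) => ->; case: (ord3P (y tB)) => ->; rewrite //= ?mul0r ?mulr0 ?eqxx.
Qed.

Definition better_assignment (j : 'I_3) : allocation 2 3 :=
  if j == agent1 then half_half (bnd it1 it1) (bnd it2 it3)
  else if j == agent2 then half_half (bnd it1 it1) (bnd it3 it3)
  else half_half (bnd it2 it2) (bnd it3 it2).

Lemma better_assignment_agent1 : better_assignment agent1 = alloc_better_agent1.
Proof. by []. Qed.

Lemma better_assignment_half j : exists x1 x2,
  x1 != x2 /\ better_assignment j = half_half x1 x2.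
Proof.
rewrite /better_assignment; case: (ord3P j) => ->.
- by exists (bnd it1 it1), (bnd it2 it3); rewrite bnd_eq.
- by exists (bnd it1 it1), (bnd it3 it3); rewrite bnd_eq.
- by exists (bnd it2 it2), (bnd it3 it2); rewrite bnd_eq.
Qed.

Lemma better_assignment_ge0 j x : 0 <= better_assignment j x.
Proof. by have [x1 [x2 [_ ->]]] := better_assignment_half j; exact: half_half_ge0. Qed.

(* Each item is covered by exactly two half shares. *)
Lemma better_is_assignment : is_assignment better_assignment.
Proof.
split; [|split] => [j x|j|i o].
- exact: better_assignment_ge0.
- by have [x1 [x2 [x12 ->]]] := better_assignment_half j; exact: sum_half_half.
rewrite sum_ord3 /better_assignment /= !sum_half_half_cond ?bnd_eq //.
by case: (ord2P i) => ->; rewrite ?bndF ?bndB; case: (ord3P o) => ->; apply/eqP; vm_compute.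
Qed.

Lemma better_dominates j : lex_dom (ex_pref j) (better_assignment j) (lexiPS ex_pref j).
Proof.
have top11 j' : j' != agent3 -> forall i, index (bnd it1 it1 i) (iord (ex_pref j') i) = 0%N.
  by case: (ord3P j') => -> // _ i; case: (ord2P i) => ->; rewrite ?bndF ?bndB.
case: (ord3P j) => ->.
- apply: (lex_dom_top (top11 agent1 isT)).
  by rewrite lexiPS_example ffunE eqxx; vm_compute.
- apply: (lex_dom_top (top11 agent2 isT)).
  by rewrite lexiPS_example ffunE eqxx; vm_compute.
(* agent 3: the only bundle preferred to 2_F2_B is 1_F2_B, which LexiPS does
   not give her; her LexiPS bundle 3_F2_B is worse than 2_F2_B. *)
exists (bnd it2 it2); split; first by rewrite lexiPS_example ffunE eqxx; vm_compute.
move=> y pref; have [->|/lexiPS_agent3_support Ey] := eqVneq (lexiPS ex_pref agent3 y) 0.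
  exact: better_assignment_ge0.
move: pref; rewrite Ey; apply: contraTT => _; apply: not_lex_pref => i.
by case: (ord2P i) => ->; rewrite ?bndF ?bndB.
Qed.

Theorem mainTheorem6 :
  [/\ (forall j, wf_lexpref (ex_pref j)),
      lexiPS ex_pref agent1 = alloc_lexiPS_agent1,
      lex_dom (ex_pref agent1) alloc_better_agent1 alloc_lexiPS_agent1
    & ~ lexi_efficient ex_pref (lexiPS ex_pref)].
Proof.
split; [exact: wf_ex_pref | exact: lexiPS_agent1 | | ].
- by rewrite -better_assignment_agent1 -lexiPS_agent1; exact: better_dominates.
- apply; exists better_assignment.
  by split; [exact: better_is_assignment | exact: better_dominates].
Qed.
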